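(* Let $f=a_nX^n+\dots+a_0\in K[X]$, $a_n\neq 0$, be a regular polynomial. Then the number of roots of $f$ in $K^\ast=K\setminus\{0\}$ equals the sum, over all lower edges $S$ of the Newton polygon of $f$, of the number of roots in $K^\ast$ of the lower binomial of $f$ corresponding to $S$.
   Context: $K$ is a field complete with respect to a non-archimedean discrete valuation $v$, normalized by $v(\pi)=1$ for a uniformizer $\pi$ of the valuation ring $A=\{x\in K: v(x)\geq 0\}$; the residue field $\kappa=A/\pi A$ is finite with $q$ elements and characteristic $p$. For $h=\sum_{i=0}^d c_iX^i\in K[X]$, the Newton polygon of $h$ is the convex hull of the points $(i,v(c_i))$ with $c_i\neq 0$. An edge of a polygon in $\mathbb{R}^2$ is a lower edge if it has an inner normal vector with positive second coordinate. $h$ is regular if for every lower edge $S$ of its Newton polygon, with vertices $(s,v(c_s))$ and $(s',v(c_{s'}))$, $s>s'$: (1) $S$ contains exactly two points of the set $\{(i,v(c_i)) : 0\leq i\leq d,\ c_i\neq 0\}$; (2) $p\nmid (s-s')$. In that case the polynomial $c_{s'}X^{s'}+c_sX^s$ is called the lower binomial of $h$ corresponding to $S$. *)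

From HB Require Import structures.
From mathcomp Require Import all_boot all_order all_algebra.
From Stdlib Require Import ClassicalEpsilon.
Set Implicit Arguments. Unset Strict Implicit. Unset Printing Implicit Defensive.
Import Order.TTheory GRing.Theory Num.Theory.
Local Open Scope ring_scope.

(* A discrete valuation on K is given by v : K -> int, only meaningful on
   nonzero elements (v 0 = +oo by convention; the value v 0 is never used). *)
Definition is_discrete_valuation (K : fieldType) (v : K -> int) (pi : K) : Prop :=
  [/\ (forall x y : K, x != 0 -> y != 0 -> v (x * y) = v x + v y),
      (forall x y : K, x != 0 -> y != 0 -> x + y != 0 -> Num.min (v x) (v y) <= v (x + y)),
      pi != 0 & v pi = 1].

Definition in_valring (K : fieldType) (v : K -> int) (x : K) : Prop :=
  x = 0 \/ 0 <= v x.

Definition vclose (K : fieldType) (v : K -> int) (x y : K) (M : int) : Prop :=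
  x = y \/ M <= v (x - y).

Definition v_complete (K : fieldType) (v : K -> int) : Prop :=
  forall u : nat -> K,
    (forall M : int, exists N : nat, forall m n : nat, (N <= m)%N -> (N <= n)%N ->
        vclose v (u m) (u n) M) ->
    exists l : K, forall M : int, exists N : nat, forall n : nat, (N <= n)%N ->
        vclose v (u n) l M.

(* the residue field A / pi A has exactly q elements: a list of q elements of A
   which are pairwise incongruent mod pi and represent every class. *)
Definition residue_card (K : fieldType) (v : K -> int) (q : nat) : Prop :=
  exists s : seq K, [/\ size s = q, uniq s,
    (forall x, x \in s -> in_valring v x),
    (forall x y, x \in s -> y \in s -> vclose v x y 1 -> x = y) &
    (forall a, in_valring v a -> exists2 x, x \in s & vclose v a x 1)].

(* the residue field has characteristic p: p prime and p = 0 in A / pi A *)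
Definition residue_char (K : fieldType) (v : K -> int) (p : nat) : Prop :=
  prime p /\ vclose v (p%:R : K) 0 1.

Definition local_field_data (K : fieldType) (v : K -> int) (pi : K) (p q : nat) : Prop :=
  [/\ is_discrete_valuation v pi, v_complete v, residue_card v q & residue_char v p].

(* Newton polygon. The point (k, v(c_k)) lies on or above the line through
   (i, v c_i) and (j, v c_j), i < j. *)
Definition on_or_above (K : fieldType) (v : K -> int) (h : {poly K}) (i j k : nat) : bool :=
  (j%:Z - k%:Z) * v h`_i + (k%:Z - i%:Z) * v h`_j <= (j%:Z - i%:Z) * v h`_k.

Definition on_line (K : fieldType) (v : K -> int) (h : {poly K}) (i j k : nat) : bool :=
  (j%:Z - k%:Z) * v h`_i + (k%:Z - i%:Z) * v h`_j == (j%:Z - i%:Z) * v h`_k.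

(* The segment from (i, v c_i) to (j, v c_j), i < j, is a lower edge of the
   Newton polygon of h: both are points of h, every point lies on or above the
   (non-vertical) line through them, and every point on that line lies between
   them (so they are the two vertices of the edge). *)
Definition lower_edge (K : fieldType) (v : K -> int) (h : {poly K}) (i j : nat) : bool :=
  [&& (i < j)%N, h`_i != 0, h`_j != 0 &
   [forall k : 'I_(size h), (h`_k != 0) ==>
      (on_or_above v h i j k && (on_line v h i j k ==> (i <= k <= j)%N))]].

Definition regular (K : fieldType) (v : K -> int) (p : nat) (h : {poly K}) : Prop :=
  forall i j : nat, lower_edge v h i j ->
    (forall k : nat, h`_k != 0 -> on_line v h i j k -> k = i \/ k = j)
    /\ ~~ (p %| (j - i))%N.

Definition lower_binomial (K : fieldType) (h : {poly K}) (i j : nat) : {poly K} :=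
  h`_i *: 'X^i + h`_j *: 'X^j.

Definition is_nroots_Kstar (K : fieldType) (h : {poly K}) (n : nat) : Prop :=
  exists s : seq K, [/\ uniq s, (forall x, (x \in s) = (x != 0) && root h x) & size s = n].

Definition nroots_Kstar (K : fieldType) (h : {poly K}) : nat :=
  epsilon (inhabits 0%N) (is_nroots_Kstar h).

(* A root x of f in K^* makes the terms of minimal valuation in f(x) cancel, so at
   least two indices attain the minimum of v(f_k) + k v(x): the point lies over a
   unique lower edge (i, j) of slope -v(x), and by regularity (1) only f_i x^i and
   f_j x^j have minimal valuation.  Conversely, fix such an edge and z with
   v(f_i z^i + f_j z^j) > v(f_i z^i).  After dividing by f_i z^i, both u |-> f(z u)
   and u |-> b(z u), b the lower binomial, are integral polynomials that vanish at
   u = 1 modulo pi and whose derivative at 1 is congruent to i - j, a unit by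
   regularity (2).  Hensel's lemma gives each of them exactly one root in z (1 + pi A),
   so the roots of f over the edge and the roots of b in K^* correspond one to one. *)

From mathcomp Require Import all_boot all_order all_algebra.
From mathcomp Require Import zify ring.
From Stdlib Require Import ClassicalEpsilon Classical.
Set Implicit Arguments. Unset Strict Implicit. Unset Printing Implicit Defensive.
Import Order.TTheory GRing.Theory Num.Theory.
Local Open Scope ring_scope.

Section Valuation.
Variables (K : fieldType) (v : K -> int) (pi : K).
Hypothesis Hv : is_discrete_valuation v pi.

Lemma vM (x y : K) : x != 0 -> y != 0 -> v (x * y) = v x + v y.
Proof. by case: Hv => H _ _ _; apply: H. Qed.

Lemma v1 : v 1 = 0.
Proof. by have := vM (oner_neq0 K) (oner_neq0 K); rewrite mulr1; move: (v 1) => a; lia. Qed.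

Lemma vN (x : K) : x != 0 -> v (- x) = v x.
Proof.
move=> x0; have N10 : (-1 : K) != 0 by rewrite oppr_eq0 oner_neq0.
have vN1 : v (-1) = 0 by have := vM N10 N10; rewrite mulrNN mulr1 v1; lia.
by rewrite -mulN1r vM // vN1 add0r.
Qed.

Lemma vV (x : K) : x != 0 -> v x^-1 = - v x.
Proof.
move=> x0; have := vM x0 (invr_neq0 x0); rewrite mulfV // v1; lia.
Qed.

Lemma vX (x : K) n : x != 0 -> v (x ^+ n) = n%:Z * v x.
Proof.
move=> x0; elim: n => [|n IH]; first by rewrite expr0 v1 mul0r.
rewrite exprS vM ?expf_neq0 // IH; lia.
Qed.

Definition vge (x : K) (M : int) : bool := (x == 0) || (M <= v x).

Lemma vge_neq0 (x : K) M : x != 0 -> vge x M = (M <= v x).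
Proof. by move=> x0; rewrite /vge (negbTE x0). Qed.

Lemma vge0 M : vge 0 M. Proof. by rewrite /vge eqxx. Qed.

Lemma vge_le (x : K) M M' : M' <= M -> vge x M -> vge x M'.
Proof. by move=> le /orP [h|h]; rewrite /vge ?h // (le_trans le h) orbT. Qed.

Lemma vgeN (x : K) M : vge (- x) M = vge x M.
Proof. by rewrite /vge oppr_eq0; case: (eqVneq x 0) => //= x0; rewrite vN. Qed.

Lemma vgeD (x y : K) M : vge x M -> vge y M -> vge (x + y) M.
Proof.
case: (eqVneq x 0) => [->|x0]; first by rewrite add0r.
case: (eqVneq y 0) => [->|y0]; first by rewrite addr0.
case: (eqVneq (x + y) 0) => [-> _ _|s0]; first exact: vge0.
rewrite !vge_neq0 // => hx hy; case: Hv => _ vD _ _.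
by apply: le_trans (vD _ _ x0 y0 s0); rewrite le_min hx hy.
Qed.

Lemma vgeB (x y : K) M : vge x M -> vge y M -> vge (x - y) M.
Proof. by move=> hx hy; apply: vgeD; rewrite ?vgeN. Qed.

Lemma vgeM (x y : K) a b : vge x a -> vge y b -> vge (x * y) (a + b).
Proof.
case: (eqVneq x 0) => [-> _ _|x0]; first by rewrite mul0r vge0.
case: (eqVneq y 0) => [-> _ _|y0]; first by rewrite mulr0 vge0.
by rewrite !vge_neq0 ?mulf_neq0 // vM //; apply: lerD.
Qed.

Lemma vge_sum (I : Type) (r : seq I) (P : pred I) (F : I -> K) M :
  (forall i, P i -> vge (F i) M) -> vge (\sum_(i <- r | P i) F i) M.
Proof. by move=> h; elim/big_rec: _ => [|i x Pi hx]; [apply: vge0 | apply: vgeD; rewrite ?h]. Qed.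

Lemma vge_nat n : vge (n%:R : K) 0.
Proof.
elim: n => [|n IH]; first exact: vge0.
by rewrite -addn1 natrD; apply: vgeD; rewrite // /vge v1 lexx orbT.
Qed.

Lemma vge_natM (x : K) n M : vge x M -> vge (n%:R * x) M.
Proof. by move=> hx; have := vgeM (vge_nat n) hx; rewrite add0r. Qed.

Lemma vge_all_eq0 (x : K) : (forall M, vge x M) -> x = 0.
Proof. by move=> h; move: (h (v x + 1)); rewrite /vge => /orP [/eqP|] //; lia. Qed.

Lemma vcloseE (x y : K) M : vclose v x y M <-> vge (x - y) M.
Proof.
rewrite /vclose /vge subr_eq0; split; first by case=> [->|->]; rewrite ?eqxx ?orbT.
by case/orP=> [/eqP|]; [left|right].
Qed.

Lemma v_dominant (y r : K) : y != 0 -> vge r (v y + 1) -> (y + r != 0) /\ v (y + r) = v y.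
Proof.
move=> y0; case: (eqVneq r 0) => [->|r0]; first by rewrite addr0.
rewrite vge_neq0 // => hr; case: Hv => _ vD _ _.
have s0 : y + r != 0.
  apply: contraTneq hr => /eqP; rewrite addr_eq0 => /eqP ->; rewrite vN //; move: (v y) => a; lia.
have h1 := vD _ _ y0 r0 s0.
have Nr0 : - r != 0 by rewrite oppr_eq0.
have := vD _ _ s0 Nr0; rewrite addrK vN // => /(_ y0) h2.
by split=> //; move: hr h1 h2; rewrite !ge_min; move: (v y) (v r) (v (y + r)) => a b c; lia.
Qed.

Definition vunit (x : K) : bool := (x != 0) && (v x == 0).

Lemma vunit_vge (x : K) : vunit x -> vge x 0.
Proof. by case/andP=> x0 /eqP e; rewrite /vge e lexx orbT. Qed.

Lemma vunitD (s t : K) : vunit s -> vge t 1 -> vunit (s + t).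
Proof.
case/andP=> s0 /eqP es ht; have ht1 : vge t (v s + 1) by rewrite es add0r.
by rewrite /vunit; have [-> ->] := v_dominant s0 ht1; rewrite es.
Qed.

Lemma vunitN (s : K) : vunit s -> vunit (- s).
Proof. by case/andP=> s0 /eqP es; rewrite /vunit oppr_eq0 s0 vN // es. Qed.

Lemma vunitV (s : K) : vunit s -> vunit s^-1.
Proof. by case/andP=> s0 /eqP es; rewrite /vunit invr_eq0 s0 vV // es. Qed.

Lemma vge_divu (x s : K) M : vunit s -> vge x M -> vge (x / s) M.
Proof. by move=> /vunitV/vunit_vge us hx; have := vgeM hx us; rewrite addr0. Qed.

Lemma vunit1 : vunit 1.
Proof. by rewrite /vunit oner_neq0 v1 eqxx. Qed.

Definition one_unit (x : K) : bool := vge (x - 1) 1.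

Lemma one_unit_vunit (x : K) : one_unit x -> vunit x.
Proof. by move=> h; have := vunitD vunit1 h; rewrite addrC subrK. Qed.

Lemma one_unit_neq0 (x : K) : one_unit x -> x != 0.
Proof. by case/one_unit_vunit/andP. Qed.

Lemma one_unitM (x y : K) : one_unit x -> one_unit y -> one_unit (x * y).
Proof.
rewrite /one_unit => hx hy.
have -> : x * y - 1 = (x - 1) * (y - 1) + (x - 1) + (y - 1) by ring.
by do 2?apply: vgeD => //; apply: vge_le (vgeM hx hy).
Qed.

Lemma one_unitX (x : K) n : one_unit x -> one_unit (x ^+ n).
Proof.
move=> hx; elim: n => [|n IH]; first by rewrite /one_unit expr0 subrr vge0.
by rewrite exprS one_unitM.
Qed.

Lemma v_one_unitM (x u : K) : x != 0 -> one_unit u -> v (x * u) = v x.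
Proof. by move=> x0 /one_unit_vunit/andP[u0 /eqP vu]; rewrite vM // vu addr0. Qed.

Lemma one_unit_div_sym (x y : K) : x != 0 -> y != 0 -> one_unit (y / x) -> one_unit (x / y).
Proof.
move=> x0 y0 h; have hu : vunit (x / y) by rewrite -invf_div vunitV ?one_unit_vunit.
rewrite /one_unit (_ : x / y - 1 = - (y / x - 1) * (x / y)); last by field; apply/andP.
by have := vgeM (_ : vge (- (y / x - 1)) 1) (vunit_vge hu); rewrite addr0 vgeN; apply.
Qed.

Lemma natr_vunit p m : residue_char v p -> ~~ (p %| m)%N -> vunit (m%:R : K).
Proof.
case=> pp /vcloseE; rewrite subr0 => hp ndvd.
have [a _] := Bezoutl m (prime_gt0 pp); rewrite -prime_coprime // in ndvd.
rewrite (eqP ndvd) => dvd1.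
have e1 : (1 : K) = p%:R * ((1 + a * m) %/ p)%:R - a%:R * m%:R.
  by rewrite -natrM mulnC divnK // natrD natrM; ring.
apply: contraT => nu; have hm1 : vge (m%:R : K) 1.
  case: (eqVneq (m%:R : K) 0) => [->|m0]; first exact: vge0.
  have := vge_nat m; rewrite !vge_neq0 //; move: nu; rewrite /vunit m0 /=; lia.
have : vge (1 : K) 1.
  rewrite e1; apply: vgeB; last exact: vge_natM.
  by have := vgeM hp (vge_nat ((1 + a * m) %/ p)); rewrite addr0.
by rewrite vge_neq0 ?oner_neq0 // v1.
Qed.

Lemma sum_dominant_neq0 (I : finType) (i0 : I) (F : I -> K) :
  F i0 != 0 -> (forall i, i != i0 -> vge (F i) (v (F i0) + 1)) -> \sum_i F i != 0.
Proof.
move=> F0 hF; rewrite (bigD1 i0) //=.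
have hr : vge (\sum_(i | i != i0) F i) (v (F i0) + 1) by apply: vge_sum.
by have [] := v_dominant F0 hr.
Qed.

End Valuation.

Lemma horner_deriv1 (R : nzRingType) (g : {poly R}) n : (size g <= n)%N ->
  g^`().[1] = \sum_(k < n) k%:R * g`_k.
Proof.
case: n => [|n] hg.
  by move: hg; rewrite leqn0 size_poly_eq0 => /eqP->; rewrite deriv0 horner0 big_ord0.
have hd : (size g^`() <= n)%N by apply: leq_trans (size_poly _ _) _; lia.
rewrite (horner_coef_wide _ hd) big_ord_recl mul0r add0r.
by apply: eq_bigr => k _; rewrite coef_deriv expr1n mulr1 mulr_natl lift0.
Qed.

Section Scaled.
Variable K : fieldType.

Definition scaled (h : {poly K}) (z c : K) : {poly K} :=
  \poly_(k < size h) (h`_k * z ^+ k / c).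

Lemma coef_scaled (h : {poly K}) z c k : (scaled h z c)`_k = h`_k * z ^+ k / c.
Proof.
rewrite coef_poly; case: ltnP => // hk.
by rewrite nth_default // !mul0r.
Qed.

Lemma size_scaled (h : {poly K}) z c : (size (scaled h z c) <= size h)%N.
Proof. exact: size_poly. Qed.

Lemma horner_scaled (h : {poly K}) z c u : (scaled h z c).[u] = h.[z * u] / c.
Proof.
rewrite horner_poly horner_coef mulr_suml; apply: eq_bigr => k _.
by rewrite exprMn; ring.
Qed.

End Scaled.

Section Hensel.
Variables (K : fieldType) (v : K -> int) (pi : K).
Hypothesis Hv : is_discrete_valuation v pi.
Variable g : {poly K}.
Hypothesis g_integral : forall k, vge v g`_k 0.

Lemma horner_subr_one_units x y : one_unit v x -> one_unit v y ->
  exists2 D, g.[x] - g.[y] = (x - y) * D & vge v (D - g^`().[1]) 1.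
Proof.
move=> hx hy; exists (\sum_(k < size g) g`_k * \sum_(l < k) x ^+ (k.-1 - l) * y ^+ l).
  rewrite !horner_coef -sumrB mulr_sumr; apply: eq_bigr => k _.
  by rewrite -mulrBr subrXX mulrCA.
rewrite (horner_deriv1 (leqnn _)) -sumrB; apply: (vge_sum Hv) => k _.
have -> : g`_k * (\sum_(l < k) x ^+ (k.-1 - l) * y ^+ l) - k%:R * g`_k =
    g`_k * \sum_(l < k) (x ^+ (k.-1 - l) * y ^+ l - 1).
  by rewrite sumrB sumr_const card_ord mulrBr mulr_natl mulrnAr mulr1.
have hs : vge v (\sum_(l < k) (x ^+ (k.-1 - l) * y ^+ l - 1)) 1.
  by apply: (vge_sum Hv) => l _; apply: (one_unitM Hv); apply: (one_unitX Hv).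
by have := vgeM Hv (g_integral k) hs; rewrite add0r.
Qed.

Hypothesis g'_vunit : vunit v g^`().[1].

Lemma slope_vunit D : vge v (D - g^`().[1]) 1 -> vunit v D.
Proof. by move=> h; have := vunitD Hv g'_vunit h; rewrite addrC subrK. Qed.

Lemma hensel_unique x y : one_unit v x -> one_unit v y -> root g x -> root g y -> x = y.
Proof.
move=> hx hy /eqP gx /eqP gy; have [D eD /slope_vunit/andP[D0 _]] := horner_subr_one_units hx hy.
by move/eqP: eD; rewrite gx gy subrr eq_sym mulf_eq0 (negbTE D0) orbF subr_eq0 => /eqP.
Qed.

Hypothesis g1 : vge v g.[1] 1.
Hypothesis Hc : v_complete v.

(* Newton's iteration with the slope frozen at [g'(1)]: on 1-units the true slope
   differs from it only by a multiple of [pi]. *)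
Fixpoint newton n := if n is n'.+1 then newton n' - g.[newton n'] / g^`().[1] else 1.

Lemma newton_spec n : one_unit v (newton n) /\ vge v g.[newton n] (n%:Z + 1).
Proof.
elim: n => [|n [IH1 IH2]] /=; first by rewrite /one_unit subrr vge0 add0r.
set u := newton n; set du := - (g.[u] / g^`().[1]).
have hdu : vge v du (n%:Z + 1) by rewrite (vgeN Hv) (vge_divu Hv).
have hu : one_unit v (u + du).
  rewrite /one_unit (_ : _ - 1 = (u - 1) + du); last by ring.
  by apply: (vgeD Hv) => //; apply: vge_le hdu; lia.
split=> //; have [D eD hD] := horner_subr_one_units hu IH1.
have -> : g.[u + du] = du * (D - g^`().[1]).
  have s0 : g^`().[1] != 0 by case/andP: g'_vunit.
  rewrite (_ : g.[u + du] = g.[u] + (u + du - u) * D); last by rewrite -eD; ring.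
  by rewrite /du; field.
by have := vgeM Hv hdu hD; apply: vge_le; lia.
Qed.

Lemma newton_cauchy m n : vge v (newton (m + n) - newton m) (m%:Z + 1).
Proof.
elim: n => [|n IH]; first by rewrite addn0 subrr vge0.
rewrite addnS (_ : _ - _ = (newton (m + n) - g.[newton (m + n)] / g^`().[1] - newton (m + n))
  + (newton (m + n) - newton m)); last by rewrite /=; ring.
apply: (vgeD Hv) => //; rewrite addrC addKr (vgeN Hv) (vge_divu Hv) //.
by apply: vge_le (proj2 (newton_spec _)); lia.
Qed.

Lemma newton_close m n M : (`|M| <= m)%N -> (`|M| <= n)%N -> vge v (newton m - newton n) M.
Proof.
move=> hm hn; case: (leqP m n) => hmn.
  rewrite -(subnKC hmn) -opprB (vgeN Hv); apply: vge_le (newton_cauchy _ _); lia.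
by rewrite -(subnKC (ltnW hmn)); apply: vge_le (newton_cauchy _ _); lia.
Qed.

Lemma hensel_exists : exists2 u, one_unit v u & root g u.
Proof.
have [l hl] : exists l, forall M, exists N, forall n, (N <= n)%N -> vclose v (newton n) l M.
  by apply: Hc => M; exists `|M|%N => m n hm hn; apply/vcloseE; apply: newton_close.
have [N1 hN1] := hl 1; have /vcloseE hN1l := hN1 N1 (leqnn _).
have hl1 : one_unit v l.
  rewrite /one_unit (_ : l - 1 = (newton N1 - 1) - (newton N1 - l)); last by ring.
  by apply: (vgeB Hv) => //; case: (newton_spec N1).
exists l => //; apply/eqP/(vge_all_eq0 (v := v)) => M.
have [N2 hN2] := hl M; set n := maxn N2 `|M|.
have /vcloseE hnl := hN2 n (leq_maxl _ _).
have [hu hgu] := newton_spec n.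
have [D eD /slope_vunit/vunit_vge hD] := horner_subr_one_units hu hl1.
rewrite (_ : g.[l] = g.[newton n] - (newton n - l) * D); last by rewrite -eD; ring.
apply: (vgeB Hv); first by apply: vge_le hgu; have := leq_maxr N2 `|M|; lia.
by have := vgeM Hv hnl hD; rewrite addr0.
Qed.

End Hensel.

Lemma coef_neq0_lt (R : nzSemiRingType) (h : {poly R}) k : h`_k != 0 -> (k < size h)%N.
Proof. by apply: contraR; rewrite -leqNgt => /(nth_default 0) ->. Qed.

Section NewtonPolygon.
Variables (K : fieldType) (v : K -> int) (f : {poly K}).

Definition term_val (x : K) k : int := v f`_k + k%:Z * v x.

(* [-v x] is the slope of the segment from [(i, v f_i)] to [(j, v f_j)]. *)
Definition over_edge (i j : nat) (x : K) : bool := term_val x i == term_val x j.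

Lemma edge_lineE i j k x : (i < j)%N -> over_edge i j x ->
  on_or_above v f i j k = (term_val x i <= term_val x k) /\
  on_line v f i j k = (term_val x i == term_val x k).
Proof.
rewrite /over_edge /term_val /on_or_above /on_line => ij /eqP eij.
set mu := v f`_i + i%:Z * v x.
have -> : (j%:Z - k%:Z) * v f`_i + (k%:Z - i%:Z) * v f`_j = (j%:Z - i%:Z) * (mu - k%:Z * v x).
  have -> : v f`_j = mu - j%:Z * v x by rewrite /mu eij; ring.
  by rewrite /mu; ring.
have hji : 0 < j%:Z - i%:Z by rewrite subr_gt0 ltz_nat.
split; first by rewrite ler_pM2l // lerBlDr.
by rewrite eq_le !ler_pM2l // -eq_le subr_eq.
Qed.

Section Edge.
Variables (i j : nat) (x : K).
Hypotheses (Hle : lower_edge v f i j) (Hx : over_edge i j x).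

Lemma edge_term_vals k : f`_k != 0 ->
  term_val x i <= term_val x k /\ (term_val x i = term_val x k -> (i <= k <= j)%N).
Proof.
move=> fk; case/and4P: Hle => ij _ _ /forallP /(_ (Ordinal (coef_neq0_lt fk))) /=.
have [-> ->] := edge_lineE k ij Hx.
by rewrite fk /= => /andP[-> /implyP hk]; split=> // /eqP.
Qed.

Lemma edge_term_gt p k : regular v p f -> f`_k != 0 -> k != i -> k != j ->
  term_val x i < term_val x k.
Proof.
move=> Hreg fk ki kj; have [hle _] := edge_term_vals fk.
rewrite lt_neqAle hle andbT; apply: contraTneq isT => eik.
have ij : (i < j)%N by case/and4P: Hle.
have [_ online] := edge_lineE k ij Hx.
have [/(_ k fk) + _] := Hreg _ _ Hle; rewrite online eik eqxx.
by case=> // ek; [move: ki | move: kj]; rewrite ek eqxx.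
Qed.

End Edge.

Lemma over_edge_unique i j i' j' x : lower_edge v f i j -> lower_edge v f i' j' ->
  over_edge i j x -> over_edge i' j' x -> i = i' /\ j = j'.
Proof.
move=> le le' e e'.
have [_ fi fj _] := and4P le; have [_ fi' fj' _] := and4P le'.
have [a1 a2] := edge_term_vals le e fi'; have [b1 b2] := edge_term_vals le e fj'.
have [c1 c2] := edge_term_vals le' e' fi; have [d1 d2] := edge_term_vals le' e' fj.
move/eqP: e => e; move/eqP: e' => e'.
have eii : term_val x i = term_val x i' by apply/eqP; rewrite eq_le a1 c1.
move: (a2 eii) (b2 (etrans eii e')) (c2 (esym eii)) (d2 (etrans (esym eii) e)).
move=> /andP[? ?] /andP[? ?] /andP[? ?] /andP[? ?].
by split; apply/eqP; rewrite eqn_leq; apply/andP.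
Qed.

Variable pi : K.
Hypothesis Hv : is_discrete_valuation v pi.

Lemma v_term x k : x != 0 -> f`_k != 0 -> v (f`_k * x ^+ k) = term_val x k.
Proof. by move=> x0 fk; rewrite (vM Hv) ?expf_neq0 // (vX Hv). Qed.

Lemma root_over_edge x : f != 0 -> x != 0 -> root f x ->
  exists i j, lower_edge v f i j /\ over_edge i j x.
Proof.
move=> f0 x0 rx.
have lead : f`_(size f).-1 != 0 by rewrite -lead_coefE lead_coef_eq0.
pose top : 'I_(size f) := Ordinal (coef_neq0_lt lead).
case: (@arg_minP _ _ _ top (fun k : 'I_(size f) => f`_k != 0) (fun k => term_val x k) lead).
move=> m fm min_m.
set mu := term_val x m.
have hmu k : f`_k != 0 -> mu <= term_val x k.
  by move=> fk; apply: (min_m (Ordinal (coef_neq0_lt fk))).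
pose Q k := (f`_k != 0) && (term_val x k == mu).
have exQ : exists k, Q k by exists m; rewrite /Q fm eqxx.
have ubQ k : Q k -> (k <= size f)%N by case/andP=> /coef_neq0_lt/ltnW.
case: (ex_minnP exQ) => i /andP[fi /eqP vi] imin.
case: (ex_maxnP exQ ubQ) => j /andP[fj /eqP vj] jmax.
have inQ k : f`_k != 0 -> term_val x k = mu -> (i <= k <= j)%N.
  by move=> fk vk; rewrite imin ?jmax // /Q fk vk eqxx.
(* A single term of minimal valuation could not cancel in [f(x)]. *)
have ij : (i < j)%N.
  rewrite ltnNge; apply: contraL rx => ji; rewrite /root horner_coef.
  apply: (sum_dominant_neq0 Hv (i0 := Ordinal (coef_neq0_lt fi))) => [|k ki].
    by rewrite mulf_neq0 ?expf_neq0.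
  case: (eqVneq f`_k 0) => [->|fk]; first by rewrite mul0r vge0.
  rewrite vge_neq0 ?mulf_neq0 ?expf_neq0 // !v_term // lezD1 vi lt_neqAle hmu // andbT.
  apply: contraNneq ki => ek; rewrite -val_eqE /= eqn_leq.
  by have /andP[-> /leq_trans ->] := inQ k fk (esym ek).
have Hx : over_edge i j x by rewrite /over_edge vi vj.
exists i, j; split => //; apply/and4P; split => //; apply/forallP => k; apply/implyP => fk.
have [-> ->] := edge_lineE k ij Hx.
by rewrite vi hmu //=; apply/implyP => /eqP /esym; apply: inQ.
Qed.

End NewtonPolygon.

Lemma uniq_leq_size_rel (T : eqType) (A B : seq T) (R : T -> T -> bool) :
  uniq A -> (forall a, a \in A -> exists2 b, b \in B & R a b) ->
  (forall a a' b, a \in A -> a' \in A -> b \in B -> R a b -> R a' b -> a = a') ->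
  (size A <= size B)%N.
Proof.
move=> uA exR injR; pose phi a := nth a B (find (R a) B).
have phiP a : a \in A -> phi a \in B /\ R a (phi a).
  move=> aA; have [b bB Rab] := exR a aA.
  have hasR : has (R a) B by apply/hasP; exists b.
  by split; [apply: mem_nth; rewrite -has_find | apply: nth_find].
rewrite -(size_map phi); apply: uniq_leq_size.
  rewrite map_inj_in_uniq // => a a' aA a'A e.
  have [phiB Ra] := phiP a aA; have [_ Ra'] := phiP a' a'A.
  by apply: (injR a a' (phi a)); rewrite // e.
by move=> b /mapP [a aA ->]; case: (phiP a aA).
Qed.

Lemma sum_count_partition (T : eqType) (I : finType) (Q : pred I) (P : I -> pred T) (s : seq T) :
  (forall x, x \in s -> exists2 e, Q e & P e x) ->
  (forall x e e', x \in s -> Q e -> Q e' -> P e x -> P e' x -> e = e') ->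
  (\sum_(e | Q e) count (P e) s)%N = size s.
Proof.
move=> exP uniqP; rewrite -sum1_size.
under eq_bigr do rewrite -sum1_count big_mkcond.
rewrite exchange_big /= !big_seq; apply: eq_bigr => x xs.
have [e Qe Pex] := exP x xs; rewrite (bigD1 e) //= Pex big1 ?addn0 // => e' /andP[Qe' e'e].
by case: ifP => // Pe'x; move: e'e; rewrite (uniqP x e' e xs Qe' Qe Pe'x Pex) eqxx.
Qed.

Section Roots.
Variable K : fieldType.

Lemma roots_Kstar_list (h : {poly K}) : h != 0 ->
  exists2 s : seq K, uniq s & forall x, (x \in s) = (x != 0) && root h x.
Proof.
elim: {h}(size h) {-2}h (leqnn (size h)) => [|n IH] h hn h0.
  by move: hn; rewrite leqn0 size_poly_eq0 (negbTE h0).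
have [[x /andP[x0 rx]]|] := classic (exists x, (x != 0) && root h x); last first.
  by move=> nx; exists [::] => // y; apply/esym/negP => hy; apply: nx; exists y.
have [g hg] := factor_theorem _ _ rx.
have g0 : g != 0 by apply: contraNneq h0 => g0; rewrite hg g0 mul0r.
have gn : (size g <= n)%N.
  by move: hn; rewrite hg size_mul ?polyXsubC_eq0 // size_XsubC addn2.
have [s us hs] := IH g gn g0.
exists (if x \in s then s else x :: s) => [|y]; first by case: ifP => //= ->.
rewrite hg rootM root_XsubC; case: ifP => xs.
  rewrite hs; case: (eqVneq y x) => [->|_]; last by rewrite orbF.
  by move: xs; rewrite hs => /andP[-> ->].
by rewrite in_cons hs; case: (eqVneq y x) => [->|_]; rewrite ?x0 ?orbT ?orbF.
Qed.

Lemma nroots_Kstar_size (h : {poly K}) (s : seq K) : uniq s ->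
  (forall x, (x \in s) = (x != 0) && root h x) -> nroots_Kstar h = size s.
Proof.
move=> us hs; rewrite /nroots_Kstar; have ex : exists n, is_nroots_Kstar h n by exists (size s), s.
have [s' [us' hs' <-]] := epsilon_spec (inhabits 0%N) (is_nroots_Kstar h) ex.
by apply/esym/perm_size/uniq_perm => // x; rewrite hs hs'.
Qed.

End Roots.

Lemma big_ord_split2 (R : zmodType) n i j (F : nat -> R) : (i < n)%N -> (j < n)%N -> i != j ->
  \sum_(k < n) F k = F i + F j + \sum_(k < n | (k != i :> nat) && (k != j :> nat)) F k.
Proof.
move=> ilt jlt ij; rewrite (bigD1 (Ordinal ilt)) //= (bigD1 (Ordinal jlt)) /=.
  by rewrite addrA.
by rewrite -val_eqE /= eq_sym.
Qed.

Section LowerEdge.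
Variables (K : fieldType) (v : K -> int) (pi : K) (p q : nat).
Hypothesis HK : local_field_data v pi p q.
Variables (f : {poly K}) (i j : nat).
Hypotheses (Hreg : regular v p f) (Hle : lower_edge v f i j).

Let Hv : is_discrete_valuation v pi. Proof. by case: HK. Qed.
Let ij : (i < j)%N. Proof. by case/and4P: Hle. Qed.
Let i_neq_j : i != j. Proof. by rewrite neq_ltn ij. Qed.
Let fi : f`_i != 0. Proof. by case/and4P: Hle. Qed.
Let fj : f`_j != 0. Proof. by case/and4P: Hle. Qed.

Local Notation b := (lower_binomial f i j).

Definition edge_ratio (z : K) : K := f`_j * z ^+ j / (f`_i * z ^+ i).

(* Apart from the two monomials of the edge, all monomials of [h] lie strictly above
   it; [f] (by regularity) and its lower binomial are the two instances. *)
Definition edge_dominated (h : {poly K}) : Prop :=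
  forall z, z != 0 -> over_edge v f i j z ->
  [/\ h`_i = f`_i, h`_j = f`_j &
      forall k, k != i -> k != j -> vge v (h`_k * z ^+ k / (f`_i * z ^+ i)) 1].

Lemma dominated_f : edge_dominated f.
Proof.
move=> z z0 Hz; split=> // k ki kj.
case: (eqVneq f`_k 0) => [->|fk]; first by rewrite !mul0r vge0.
have d0 : f`_i * z ^+ i != 0 by rewrite mulf_neq0 ?expf_neq0.
rewrite vge_neq0 ?mulf_neq0 ?invr_eq0 ?expf_neq0 // (vM Hv) ?invr_eq0 ?mulf_neq0 ?expf_neq0 //.
rewrite (vV Hv) // !(v_term Hv) // lerBrDl lezD1.
exact (edge_term_gt Hle Hz Hreg fk ki kj).
Qed.

Lemma coef_lower_binomial k :
  b`_k = (if k == i then f`_i else 0) + (if k == j then f`_j else 0).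
Proof. by rewrite coefD !coefZ !coefXn; case: (k == i); case: (k == j); rewrite ?mulr1 ?mulr0. Qed.

Lemma dominated_binomial : edge_dominated b.
Proof.
move=> z _ _; split=> [||k ki kj]; rewrite coef_lower_binomial ?eqxx.
- by rewrite (negbTE i_neq_j) addr0.
- by rewrite eq_sym (negbTE i_neq_j) add0r.
by rewrite (negbTE ki) (negbTE kj) addr0 !mul0r vge0.
Qed.

Lemma lower_binomial_neq0 : b != 0.
Proof.
apply: contra_neq fi => b0.
by have := coef_lower_binomial i; rewrite b0 coef0 eqxx (negbTE i_neq_j) addr0.
Qed.

Lemma horner_lower_binomial z : z != 0 -> b.[z] / (f`_i * z ^+ i) = 1 + edge_ratio z.
Proof. by move=> z0; rewrite hornerD !hornerZ !hornerXn mulrDl divff ?mulf_neq0 ?expf_neq0. Qed.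

Lemma approx_over_edge z : z != 0 -> vge v (1 + edge_ratio z) 1 -> over_edge v f i j z.
Proof.
move=> z0 approx; have := vunitD Hv (vunitN Hv (vunit1 Hv)) approx.
rewrite addKr => /andP[_ /eqP].
rewrite /edge_ratio (vM Hv) ?invr_eq0 ?mulf_neq0 ?expf_neq0 // (vV Hv) ?mulf_neq0 ?expf_neq0 //.
by rewrite !(v_term Hv) // /over_edge => /eqP; rewrite subr_eq0 eq_sym.
Qed.

Lemma edge_slope_vunit z : vge v (1 + edge_ratio z) 1 -> vunit v (i%:R + j%:R * edge_ratio z).
Proof.
move=> approx; have p_ndvd : ~~ (p %| j - i)%N by case: (Hreg Hle).
have -> : i%:R + j%:R * edge_ratio z = - (j - i)%N%:R + j%:R * (1 + edge_ratio z).
  by rewrite natrB 1?ltnW //; ring.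
apply: (vunitD Hv); first by apply: (vunitN Hv); apply: (natr_vunit Hv) p_ndvd; case: HK.
exact: (vge_natM Hv).
Qed.

Section Dominated.
Variables (h : {poly K}) (z : K).
Hypotheses (Hh : edge_dominated h) (z0 : z != 0).
Local Notation d := (f`_i * z ^+ i).

Let d0 : d != 0. Proof. by rewrite mulf_neq0 ?expf_neq0. Qed.

Lemma dominated_scaled_at1 : over_edge v f i j z ->
  vge v ((scaled h z d).[1] - (1 + edge_ratio z)) 1.
Proof.
move=> Hz; have [hi hj hk] := Hh z0 Hz.
have ilt : (i < size h)%N by apply: coef_neq0_lt; rewrite hi.
have jlt : (j < size h)%N by apply: coef_neq0_lt; rewrite hj.
rewrite horner_scaled mulr1 horner_coef mulr_suml.
rewrite (big_ord_split2 (fun k => h`_k * z ^+ k / d) ilt jlt i_neq_j) /= hi hj divff //.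
by rewrite [_ + _ + _]addrC addrK; apply: (vge_sum Hv) => k /andP[]; apply: hk.
Qed.

Lemma dominated_root_approx : over_edge v f i j z -> root h z -> vge v (1 + edge_ratio z) 1.
Proof.
move=> Hz /eqP hz; have := dominated_scaled_at1 Hz.
by rewrite horner_scaled mulr1 hz mul0r sub0r (vgeN Hv).
Qed.

Hypothesis approx : vge v (1 + edge_ratio z) 1.

Let Hz : over_edge v f i j z. Proof. exact: approx_over_edge. Qed.

Lemma dominated_scaled_hensel :
  [/\ forall k, vge v (scaled h z d)`_k 0, vge v (scaled h z d).[1] 1 &
      vunit v (scaled h z d)^`().[1]].
Proof.
have [hi hj hk] := Hh z0 Hz.
have ilt : (i < size h)%N by apply: coef_neq0_lt; rewrite hi.
have jlt : (j < size h)%N by apply: coef_neq0_lt; rewrite hj.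
have t_vunit : vunit v (edge_ratio z).
  by have := vunitD Hv (vunitN Hv (vunit1 Hv)) approx; rewrite addKr.
split.
- move=> k; rewrite coef_scaled.
  have [->|ki] := eqVneq k i; first by rewrite hi divff // (vunit_vge (vunit1 Hv)).
  have [->|kj] := eqVneq k j; first by rewrite hj (vunit_vge t_vunit).
  exact: vge_le (hk k ki kj).
- rewrite -[_.[1]](subrK (1 + edge_ratio z)).
  by apply: (vgeD Hv) => //; apply: dominated_scaled_at1.
rewrite (horner_deriv1 (size_scaled _ _ _)).
rewrite (big_ord_split2 (fun k => k%:R * (scaled h z d)`_k) ilt jlt i_neq_j) /=.
rewrite !coef_scaled hi hj divff // mulr1 -/(edge_ratio z).
apply: (vunitD Hv); first exact: edge_slope_vunit.
by apply: (vge_sum Hv) => k /andP[ki kj]; rewrite coef_scaled; apply: (vge_natM Hv); apply: hk.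
Qed.

Lemma dominated_root_near : v_complete v -> exists2 y, one_unit v (y / z) & root h y.
Proof.
move=> Hc; have [g_int g1 g'] := dominated_scaled_hensel.
have [u hu] := hensel_exists Hv g_int g' g1 Hc.
rewrite /root horner_scaled mulf_eq0 invr_eq0 (negbTE d0) orbF => hzu.
by exists (z * u); rewrite // mulrC mulKf.
Qed.

Lemma dominated_root_near_unique y y' : one_unit v (y / z) -> one_unit v (y' / z) ->
  root h y -> root h y' -> y = y'.
Proof.
have [g_int _ g'] := dominated_scaled_hensel.
move=> hy hy' ry ry'; apply: (divIf z0); apply: (hensel_unique Hv g_int g' hy hy').
  by rewrite /root horner_scaled (mulrC z) divfK // (eqP ry) mul0r.
by rewrite /root horner_scaled (mulrC z) divfK // (eqP ry') mul0r.
Qed.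

End Dominated.

Lemma over_edge_one_unit x y : x != 0 -> one_unit v (y / x) ->
  over_edge v f i j y = over_edge v f i j x.
Proof.
move=> x0 hu; rewrite /over_edge /term_val (_ : v y = v x) //.
by rewrite -(v_one_unitM Hv x0 hu) mulrC divfK.
Qed.

(* Around a root [x] of [h1], Hensel's lemma for [h2] gives a root [y] with [y / x]
   a 1-unit, and Hensel's lemma for [h1] around [y] shows that [x] is determined by [y]. *)
Lemma edge_roots_leq h1 h2 (A B : seq K) : v_complete v ->
  edge_dominated h1 -> edge_dominated h2 -> uniq A ->
  (forall x, x \in A -> [&& x != 0, over_edge v f i j x & root h1 x]) ->
  (forall y, (y \in B) = [&& y != 0, over_edge v f i j y & root h2 y]) ->
  (size A <= size B)%N.
Proof.
move=> Hc dom1 dom2 uA hA hB.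
apply: (uniq_leq_size_rel (R := fun x y => one_unit v (y / x))) => // [x|x x' y].
  case/hA/and3P => x0 Hx rx.
  have [y hy ry] := dominated_root_near dom2 x0 (dominated_root_approx dom1 x0 Hx rx) Hc.
  exists y => //; rewrite hB ry (over_edge_one_unit x0 hy) Hx !andbT.
  by have := one_unit_neq0 Hv hy; rewrite mulf_eq0 negb_or => /andP[].
move=> /hA/and3P[x0 Hx rx] /hA/and3P[x'0 Hx' rx']; rewrite hB => /and3P[y0 Hy ry] hxy hx'y.
apply: (dominated_root_near_unique dom1 y0 (dominated_root_approx dom2 y0 Hy ry)) => //.
  exact (one_unit_div_sym Hv x0 y0 hxy).
exact (one_unit_div_sym Hv x'0 y0 hx'y).
Qed.

Lemma count_over_edge (S : seq K) : uniq S ->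
  (forall x, (x \in S) = (x != 0) && root f x) ->
  count (over_edge v f i j) S = nroots_Kstar b.
Proof.
move=> uS hS; have Hc : v_complete v by case: HK.
have [T uT hT] := roots_Kstar_list lower_binomial_neq0.
have hT' y : (y \in T) = [&& y != 0, over_edge v f i j y & root b y].
  rewrite hT; case: (eqVneq y 0) => //= y0.
  case: (boolP (root b y)) => [/eqP rb|]; last by rewrite andbF.
  rewrite andbT; apply/esym/(approx_over_edge y0).
  by rewrite -horner_lower_binomial // rb mul0r vge0.
have hA x : (x \in filter (over_edge v f i j) S) = [&& x != 0, over_edge v f i j x & root f x].
  by rewrite mem_filter hS andbCA.
rewrite -size_filter (nroots_Kstar_size uT hT); apply/eqP; rewrite eqn_leq.
rewrite (edge_roots_leq Hc dominated_f dominated_binomial _ _ hT') ?filter_uniq //=;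
  last by move=> x; rewrite hA.
by rewrite (edge_roots_leq Hc dominated_binomial dominated_f uT _ hA) // => y; rewrite hT'.
Qed.

End LowerEdge.

Unset Implicit Arguments.

Theorem theorem4p6 (K : fieldType) (v : K -> int) (pi : K) (p q : nat)
  (HK : local_field_data v pi p q) (f : {poly K}) (Hf : f != 0)
  (Hreg : regular v p f) :
  nroots_Kstar f =
  (\sum_(e : 'I_(size f) * 'I_(size f) | lower_edge v f e.1 e.2)
      nroots_Kstar (lower_binomial f e.1 e.2))%N.
Proof.
have Hv : is_discrete_valuation v pi by case: HK.
have [S uS hS] := roots_Kstar_list Hf.
pose Edge := ('I_(size f) * 'I_(size f))%type.
rewrite (nroots_Kstar_size uS hS) -(@sum_count_partition _ _
  (fun e : Edge => lower_edge v f e.1 e.2) (fun e : Edge => over_edge v f e.1 e.2)).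
- by apply: eq_bigr => e le; rewrite (count_over_edge HK Hreg le uS hS).
- move=> x; rewrite hS => /andP[x0 rx].
  have [i [j [le Hx]]] := root_over_edge Hv Hf x0 rx; have [_ fi fj _] := and4P le.
  by exists (Ordinal (coef_neq0_lt fi), Ordinal (coef_neq0_lt fj)).
move=> x [a b] [a' b'] _ /= le le' Hx Hx'.
by have [/val_inj -> /val_inj ->] := over_edge_unique le le' Hx Hx'.
Qed.
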